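(* Let $G:[0,\nu)\to[0,\infty)$ be increasing with $G(0)=0$ and range $[0,\infty)$, and suppose that for every $c>0$ the function $x\mapsto G^{-1}(G(x)+G(c))$ is concave on $[0,\nu)$. Let $f$ be convex on $[0,\infty)$ with $f(1)=0$ and $\mathsf{D_m}(f)\le\nu$. Assume that $G(D_f(q_Yq_Z\|r_Yr_Z))\le G(D_f(q_Y\|r_Y))+G(D_f(q_Z\|r_Z))$ holds for all distributions $q_Y\ll r_Y$ on $\mathcal{Y}$ and $q_Z\ll r_Z$ on $\mathcal{Z}$ whenever $|\mathcal{Y}|=|\mathcal{Z}|=2$. Then this inequality holds for all distributions $q_Y\ll r_Y$, $q_Z\ll r_Z$ on finite alphabets $\mathcal{Y},\mathcal{Z}$ of arbitrary size.
   Context: For distributions $p\ll q$ on a finite set, $D_f(p\|q)=\sum_x q(x) f(p(x)/q(x))$ with $0f(0/0)=0$; $\mathsf{D_m}(f)=f(0)+\lim_{t\to\infty}f(t)/t$. *)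

From HB Require Import structures.
From mathcomp Require Import all_boot all_order all_algebra.
From mathcomp Require Import all_classical all_reals all_analysis.
Set Implicit Arguments. Unset Strict Implicit. Unset Printing Implicit Defensive.
Import Order.TTheory GRing.Theory Num.Theory.
Local Open Scope classical_set_scope.
Local Open Scope ring_scope.

Section Defs.
Variable R : realType.

Definition convex_on (D : set R) (h : R -> R) : Prop :=
  forall x y t, D x -> D y -> 0 <= t -> t <= 1 ->
    h (t * x + (1 - t) * y) <= t * h x + (1 - t) * h y.

Definition concave_on (D : set R) (h : R -> R) : Prop :=
  forall x y t, D x -> D y -> 0 <= t -> t <= 1 ->
    t * h x + (1 - t) * h y <= h (t * x + (1 - t) * y).

Definition dom0 (nu : \bar R) : set R := fun x => 0 <= x /\ (x%:E < nu)%E.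

(* the inverse of G on [0, nu) (unique preimage when G is strictly increasing) *)
Definition Ginv (G : R -> R) (nu : \bar R) (y : R) : R :=
  xget 0 (fun x => dom0 nu x /\ G x = y).

Definition is_dist (T : finType) (p : T -> R) : Prop :=
  (forall x, 0 <= p x) /\ \sum_(x : T) p x = 1.

Definition abs_cont (T : finType) (p q : T -> R) : Prop :=
  forall x, q x = 0 -> p x = 0.

(* f-divergence D_f(p||q) = sum_x q(x) f(p(x)/q(x)); for p << q the terms
   with q x = 0 vanish (0 * _ = 0), matching the convention 0 f(0/0) = 0 *)
Definition Df (f : R -> R) (T : finType) (p q : T -> R) : R :=
  \sum_(x : T) q x * f (p x / q x).

Definition prod_dist (Y Z : finType) (p : Y -> R) (q : Z -> R) : Y * Z -> R :=
  fun yz => p yz.1 * q yz.2.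

Definition Dm (f : R -> R) : \bar R :=
  ((f 0)%:E + lim ((f t / t)%:E @[t --> +oo%R]))%E.

End Defs.

From HB Require Import structures.
From mathcomp Require Import all_boot all_order all_algebra.
From mathcomp Require Import all_classical all_reals all_analysis.
From mathcomp Require Import ring lra.
Import Order.TTheory GRing.Theory Num.Theory.
Local Open Scope classical_set_scope.
Local Open Scope ring_scope.

(* Fix (q_Z, r_Z), put c = D_f(q_Z || r_Z), phi(s) = D_f(s q_Z || r_Z) and
   Psi(x) = G^-1(G(x) + G(c)), which is concave.  With t = q_Y / r_Y,
   D_f(q_Y q_Z || r_Y r_Z) = sum_y r_Y(y) phi(t(y)), and the claim for (q_Y, r_Y) is
   sum_y r_Y(y) phi(t(y)) <= Psi(sum_y r_Y(y) f(t(y))).  The binary hypothesis gives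
   this when r_Y has two atoms.  Every weight r with sum r t = sum r splits into such
   a two-atom weight and a remainder of the same kind with strictly smaller support,
   so the inequality follows for all Y by induction on the support and concavity of
   Psi.  Exchanging the factors extends it to all Z.  The bound D_m(f) <= nu keeps
   every divergence in the domain [0, nu) of G. *)

Section ConcaveWeighted.
Context {R : realType}.

Lemma wsum2_convex_comb (m1 m2 a b : R) : m1 + m2 != 0 ->
  m1 * a + m2 * b = (m1 + m2) * (m1 / (m1 + m2) * a + (1 - m1 / (m1 + m2)) * b).
Proof. by move=> m_neq0; field. Qed.

Lemma concave_on_wmean [D : set R] [Psi : R -> R] [m1 m2 x1 x2 : R] :
  concave_on D Psi -> D x1 -> D x2 -> 0 <= m1 -> 0 <= m2 ->
  m1 * Psi x1 + m2 * Psi x2 <= (m1 + m2) * Psi ((m1 * x1 + m2 * x2) / (m1 + m2)).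
Proof.
move=> Psi_conc Dx1 Dx2 m1_ge0 m2_ge0.
have [m_eq0|m_neq0] := eqVneq (m1 + m2) 0.
  have [-> ->] : m1 = 0 /\ m2 = 0 by split; lra.
  by rewrite addr0 !mul0r addr0.
have m_gt0 : 0 < m1 + m2 by rewrite lt_def m_neq0 addr_ge0.
rewrite wsum2_convex_comb // [_ * x1 + _]wsum2_convex_comb // [_ * _ / _]mulrC mulKf //.
apply: ler_wpM2l; first exact: ltW.
apply: Psi_conc; rewrite ?divr_ge0 ?addr_ge0 //.
by rewrite ler_pdivrMr // mul1r lerDl.
Qed.

End ConcaveWeighted.

Section MeanOne.
Context {R : realType} {Y : finType}.
Implicit Types (r t x : Y -> R).

Definition mean_one r t := \sum_y r y * t y = \sum_y r y.

Definition wmean r x := (\sum_y r y * x y) / \sum_y r y.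

Definition mass (i : Y) (w : R) : Y -> R := fun y => if y == i then w else 0.

Lemma sum_mass_mul i w x : \sum_y mass i w y * x y = w * x i.
Proof.
by rewrite (bigD1 i) //= /mass eqxx big1 ?addr0 // => y /negbTE ->; rewrite mul0r.
Qed.

Lemma sum_mass i w : \sum_y mass i w y = w.
Proof.
by rewrite (bigD1 i) //= /mass eqxx big1 ?addr0 // => y /negbTE ->.
Qed.

Lemma mean_oneE r t : mean_one r t <-> \sum_y r y * (t y - 1) = 0.
Proof.
under eq_bigr do rewrite mulrBr mulr1.
rewrite sumrB /mean_one; split=> [->|/eqP]; first exact: subrr.
by rewrite subr_eq0 => /eqP.
Qed.

Lemma sum_mul_wmean r x : (forall y, 0 <= r y) ->
  (\sum_y r y) * wmean r x = \sum_y r y * x y.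
Proof.
move=> r0; have [r_eq0|r_neq0] := eqVneq (\sum_y r y) 0.
  rewrite r_eq0 mul0r; apply/esym/big1 => y _.
  by rewrite (psumr_eq0P (fun y _ => r0 y) r_eq0) ?mul0r.
by rewrite mulrC divfK.
Qed.

Lemma ltr_sum_at [F G : Y -> R] i : (forall y, F y <= G y) -> F i < G i ->
  \sum_y F y < \sum_y G y.
Proof.
move=> FG Fi; rewrite (bigD1 i) //= [ltRHS](bigD1 i) //=.
by rewrite ltr_leD // ler_sum.
Qed.

Lemma sumr_eq0_gt0 (F : Y -> R) i : \sum_y F y = 0 -> F i < 0 -> exists j, 0 < F j.
Proof.
move=> F0 Fi; apply: contrapT => /forallNP F_le0.
have : \sum_y F y < \sum_(y : Y) 0.
  by apply: ltr_sum_at Fi => y; rewrite leNgt; apply/negP/F_le0.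
by rewrite F0 big1 // ltxx.
Qed.

Lemma mean_one_gt1 [r t i] : (forall y, 0 <= r y) -> mean_one r t ->
  r i != 0 -> t i < 1 -> exists j, r j != 0 /\ 1 < t j.
Proof.
move=> r0 /mean_oneE rt0 ri ti.
have ri_gt0 : 0 < r i by rewrite lt0r ri r0.
have [j rtj] : exists j, 0 < r j * (t j - 1).
  by apply: (sumr_eq0_gt0 _ i rt0); rewrite pmulr_rlt0 // subr_lt0.
have rj : r j != 0 by apply: contraTneq rtj => ->; rewrite mul0r ltxx.
have rj_gt0 : 0 < r j by rewrite lt0r rj r0.
by exists j; split; rewrite // -subr_gt0 -(pmulr_rgt0 _ rj_gt0).
Qed.

Lemma mean_one_lt1 [r t j] : (forall y, 0 <= r y) -> mean_one r t ->
  r j != 0 -> 1 < t j -> exists i, r i != 0 /\ t i < 1.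
Proof.
move=> r0 /mean_oneE rt0 rj tj.
have rj_gt0 : 0 < r j by rewrite lt0r rj r0.
have [i rti] : exists i, 0 < - (r i * (t i - 1)).
  apply: (sumr_eq0_gt0 _ j); first by rewrite sumrN rt0 oppr0.
  by rewrite oppr_lt0 pmulr_rgt0 // subr_gt0.
have ri : r i != 0 by apply: contraTneq rti => ->; rewrite mul0r oppr0 ltxx.
have ri_gt0 : 0 < r i by rewrite lt0r ri r0.
by exists i; split; rewrite // -subr_lt0 -(pmulr_rlt0 _ ri_gt0) -oppr_gt0.
Qed.

Lemma card_support_lt [r r'] k : (forall y, r y = 0 -> r' y = 0) ->
  r k != 0 -> r' k = 0 -> (#|support r'| < #|support r|)%N.
Proof.
move=> r'_sub rk r'k; apply/proper_card/properP; split.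
  by apply/fintype.subsetP => y; rewrite !inE; apply: contra => /eqP/r'_sub ->.
by exists k; rewrite !inE ?rk ?r'k ?eqxx.
Qed.

Lemma split_two_point [r t i j] : (forall y, 0 <= r y) ->
  r i != 0 -> r j != 0 -> t i < 1 -> 1 < t j ->
  exists wi wj, [/\ 0 < wi, 0 < wj, wi * t i + wj * t j = wi + wj,
    (forall y, 0 <= (r \- mass i wi \- mass j wj) y) &
    (#|support (r \- mass i wi \- mass j wj)| < #|support r|)%N].
Proof.
move=> r0 ri rj ti tj; have ji : j != i by apply: contraTneq ti => <-; rewrite -leNgt ltW.
have ij : i != j by rewrite eq_sym.
have ri_gt0 : 0 < r i by rewrite lt0r ri r0.
have rj_gt0 : 0 < r j by rewrite lt0r rj r0.
set a := t j - 1; set b := 1 - t i.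
have a_gt0 : 0 < a by rewrite subr_gt0.
have b_gt0 : 0 < b by rewrite subr_gt0.
(* the largest step keeping the remainder nonnegative: it vanishes at i or at j *)
pose s := Num.min (r i / a) (r j / b).
have s_gt0 : 0 < s by rewrite lt_min !divr_gt0.
have sa_le : s * a <= r i by rewrite -ler_pdivlMr // ge_min lexx.
have sb_le : s * b <= r j by rewrite -ler_pdivlMr // ge_min lexx orbT.
have r'E y : (r \- mass i (s * a) \- mass j (s * b)) y =
    if y == i then r i - s * a else if y == j then r j - s * b else r y.
  rewrite /= /mass; case: eqVneq => [->|_]; first by rewrite (negbTE ij) subr0.
  by case: eqVneq => [->|_]; rewrite ?subr0.
exists (s * a), (s * b); split.
- exact: mulr_gt0.
- exact: mulr_gt0.
- by rewrite /a /b; ring.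
- by move=> y; rewrite r'E; do 2?case: ifP => _; rewrite ?subr_ge0.
- have [k [rk r'k]] : exists k, r k != 0 /\ (r \- mass i (s * a) \- mass j (s * b)) k = 0.
    have [sE|sE] : s = r i / a \/ s = r j / b by rewrite /s; case: leP; [left|right].
      by exists i; rewrite r'E eqxx sE divfK ?subrr ?gt_eqF.
    by exists j; rewrite r'E (negbTE ji) eqxx sE divfK ?subrr ?gt_eqF.
  apply: (card_support_lt k) rk r'k => y ry; rewrite r'E.
  have [yi|_] := eqVneq y i; first by move: ri; rewrite -yi ry eqxx.
  have [yj|_] := eqVneq y j; first by move: rj; rewrite -yj ry eqxx.
  exact: ry.
Qed.

Lemma mean_one_split [r t k] : (forall y, 0 <= r y) -> mean_one r t -> r k != 0 ->
  exists i j wi wj, [/\ 0 < wi, 0 < wj, wi * t i + wj * t j = wi + wj,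
    (forall y, 0 <= (r \- mass i wi \- mass j wj) y) &
    (#|support (r \- mass i wi \- mass j wj)| < #|support r|)%N].
Proof.
move=> r0 rt rk; case: (ltgtP (t k) 1) => tk.
- have [j [rj tj]] := mean_one_gt1 r0 rt rk tk.
  by exists k, j; apply: split_two_point.
- have [i [ri ti]] := mean_one_lt1 r0 rt rk tk.
  by exists i, k; apply: split_two_point.
(* t k = 1: the atom at k is itself of mean one; remove it as two halves *)
have r'E y : (r \- mass k (r k / 2) \- mass k (r k / 2)) y = if y == k then 0 else r y.
  rewrite /= /mass; case: eqVneq => [->|_]; rewrite ?subr0 //.
  by rewrite -addrA -opprD -splitr subrr.
have rk_gt0 : 0 < r k by rewrite lt0r rk r0.
exists k, k, (r k / 2), (r k / 2); split.
- by rewrite divr_gt0.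
- by rewrite divr_gt0.
- by rewrite tk !mulr1.
- by move=> y; rewrite r'E; case: ifP.
- apply: (card_support_lt k) => [y|//|]; rewrite r'E ?eqxx //.
  by case: ifP.
Qed.

End MeanOne.

Section MeanOneConcave.
Context {R : realType} {Y : finType}.
Variables (D : set R) (g phi Psi : R -> R).
Hypothesis Psi_conc : concave_on D Psi.
Hypothesis two_point_le : forall l a b, 0 <= l -> l <= 1 -> 0 <= a -> 0 <= b ->
  l * a + (1 - l) * b = 1 -> l * phi a + (1 - l) * phi b <= Psi (l * g a + (1 - l) * g b).
Hypothesis D_two_point : forall l a b, 0 <= l -> l <= 1 -> 0 <= a -> 0 <= b ->
  l * a + (1 - l) * b = 1 -> D (l * g a + (1 - l) * g b).
Hypothesis D_wmean : forall {r t : Y -> R}, (forall y, 0 <= r y) -> (forall y, 0 <= t y) ->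
  mean_one r t -> D (wmean r (g \o t)).

Lemma two_point_wmean_le [wi wj a b] : 0 < wi -> 0 < wj -> 0 <= a -> 0 <= b ->
  wi * a + wj * b = wi + wj ->
  D ((wi * g a + wj * g b) / (wi + wj)) /\
  wi * phi a + wj * phi b <= (wi + wj) * Psi ((wi * g a + wj * g b) / (wi + wj)).
Proof.
move=> wi_gt0 wj_gt0 a0 b0 wab.
have w_gt0 : 0 < wi + wj by rewrite addr_gt0.
have w_neq0 : wi + wj != 0 by rewrite gt_eqF.
set l := wi / (wi + wj).
have l0 : 0 <= l by rewrite divr_ge0 ?ltW.
have l1 : l <= 1 by rewrite ler_pdivrMr // mul1r lerDl ltW.
have lab : l * a + (1 - l) * b = 1.
  by apply: (mulfI w_neq0); rewrite -wsum2_convex_comb // wab mulr1.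
rewrite (wsum2_convex_comb _ _ (phi a)) // (wsum2_convex_comb _ _ (g a)) // -/l.
rewrite [_ * _ / _]mulrC mulKf //; split.
  exact: D_two_point.
by apply: ler_wpM2l; [exact: ltW | exact: two_point_le].
Qed.

Lemma mean_one_concave_le (r t : Y -> R) : (forall y, 0 <= r y) -> (forall y, 0 <= t y) ->
  mean_one r t -> \sum_y r y * phi (t y) <= (\sum_y r y) * Psi (wmean r (g \o t)).
Proof.
move=> + t0; have [n] := ubnP #|support r|; elim: n r => // n IHn r supp_r r0 rt.
have [[k rk]|/forallNP r_eq0] := pselect (exists k, r k != 0); last first.
  have {}r_eq0 y : r y = 0 by apply/eqP/negbNE/negP; exact: r_eq0.
  by rewrite !big1 ?mul0r // => y _; rewrite r_eq0 mul0r.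
have [i [j [wi [wj [wi_gt0 wj_gt0 wt r'0 supp_r']]]]] := mean_one_split r0 rt rk.
set r' := r \- mass i wi \- mass j wj in r'0 supp_r'.
have sumE (x : Y -> R) : \sum_y r y * x y = \sum_y r' y * x y + (wi * x i + wj * x j).
  rewrite /r' /=; under [X in _ = X + _]eq_bigr do rewrite !mulrBl.
  by rewrite !sumrB !sum_mass_mul; ring.
have sum1 : \sum_y r y = \sum_y r' y + (wi + wj).
  by rewrite /r' /= !sumrB !sum_mass; ring.
have r'_mean : mean_one r' t by move: rt; rewrite /mean_one sumE sum1 wt => /addIr.
have IH := IHn r' (leq_trans supp_r' supp_r) r'0 r'_mean.
have [D2 two] := two_point_wmean_le wi_gt0 wj_gt0 (t0 i) (t0 j) wt.
have -> : wmean r (g \o t) = ((\sum_y r' y) * wmean r' (g \o t) + (wi + wj) *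
    ((wi * g (t i) + wj * g (t j)) / (wi + wj))) / (\sum_y r' y + (wi + wj)).
  by rewrite sum_mul_wmean // [(wi + wj) * _]mulrC divfK ?gt_eqF ?addr_gt0 // /wmean sumE sum1.
rewrite sumE sum1; apply: le_trans (lerD IH two) _.
apply: (concave_on_wmean Psi_conc (D_wmean r'0 t0 r'_mean) D2).
  exact: sumr_ge0.
by rewrite addr_ge0 ?ltW.
Qed.

End MeanOneConcave.

Section ConvexSlope.
Context {R : realType}.
Variable f : R -> R.
Hypothesis f_cvx : convex_on (fun t => 0 <= t) f.

Lemma slope_mono s t : 0 < s -> s <= t -> (f s - f 0) / s <= (f t - f 0) / t.
Proof.
move=> s_gt0 st; have t_gt0 : 0 < t by apply: lt_le_trans st.
have u0 : 0 <= s / t by rewrite divr_ge0 ?ltW.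
have u1 : s / t <= 1 by rewrite ler_pdivrMr // mul1r.
have := f_cvx t 0 (s / t) (ltW t_gt0) (lexx 0) u0 u1.
rewrite mulr0 addr0 divfK ?gt_eqF // => fs_le.
have -> : (f t - f 0) / t = (s / t * f t + (1 - s / t) * f 0 - f 0) / s.
  by field; rewrite !gt_eqF.
by rewrite ler_pM2r ?invr_gt0 // lerD2r.
Qed.

Lemma slope_le_lim_ratio t : 0 < t ->
  (((f t - f 0) / t)%:E <= lim ((f x / x)%:E @[x --> +oo%R]))%E.
Proof.
(* clipping at 1 makes the slope nondecreasing on all of R *)
move=> t_gt0; pose h x := (f (Num.max x 1) - f 0) / Num.max x 1.
have h_mono : {homo (fun x => (h x)%:E) : x y / x <= y >-> (x <= y)%E}.
  move=> x y xy; rewrite lee_fin; apply: slope_mono.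
    by rewrite lt_max ltr01 orbT.
  by rewrite ge_max !le_max xy lexx !orbT.
have inv_cvg : ((f 0 / x)%:E @[x --> +oo%R] --> (0 : R)%:E).
  apply: cvg_EFin; first by near=> x.
  have : ((x : R)^-1 @[x --> +oo%R] --> 0).
    by apply/(@gtr0_cvgV0 _ _ _ _ id); [near=> x | exact: cvg_id].
  by move/(@cvgMr _ _ _ _ _ (f 0)); rewrite mulr0.
have ratio_cvg : ((f x / x)%:E @[x --> +oo%R] --> ereal_sup (range (fun x => (h x)%:E))).
  rewrite -[ereal_sup _]adde0.
  apply: cvg_trans (cvgeD _ (nondecreasing_cvge h_mono) inv_cvg); last first.
    exact: fin_num_adde_defl.
  apply: near_eq_cvg; near=> x.
  have x_gt1 : 1 < x by near: x; apply: nbhs_pinfty_gt; rewrite num_real.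
  by rewrite -EFinD /h max_l ?ltW // mulrBl addrNK.
rewrite (cvg_lim _ ratio_cvg) //; apply: le_trans (ereal_sup_ubound _); last by exists t.
by rewrite lee_fin; apply: slope_mono; rewrite ?le_max ?lexx.
Unshelve. all: by end_near.
Qed.

Lemma f_le_Dm_line [nu : R] : (Dm f <= nu%:E)%E ->
  forall t, 0 <= t -> f t <= f 0 + (nu - f 0) * t.
Proof.
move=> Dm_le t; rewrite le0r => /predU1P[->|t_gt0]; first by rewrite mulr0 addr0.
have : ((f 0)%:E + ((f t - f 0) / t)%:E <= nu%:E)%E.
  by apply: le_trans Dm_le; apply: leeD2l; exact: slope_le_lim_ratio.
by rewrite -EFinD lee_fin -lerBrDl ler_pdivrMr // -lerBlDl.
Qed.

Hypothesis f1 : f 1 = 0.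

Lemma f_lt_Dm_line [nu : R] : 0 < nu -> (Dm f <= nu%:E)%E ->
  forall b, 1 <= b -> f b < f 0 + (nu - f 0) * b.
Proof.
move=> nu_gt0 Dm_le b b_ge1; have b_gt0 : 0 < b by apply: lt_le_trans b_ge1.
have b1_ge0 : 0 <= b + 1 by rewrite addr_ge0 ?ltW.
have mu_gt0 : 0 < b^-1 by rewrite invr_gt0.
have mu_le1 : b^-1 <= 1 by rewrite invf_le1.
(* b lies between 1 and b + 1, where f is below the line, strictly at 1 as f 1 = 0 < nu *)
have := f_cvx 1 (b + 1) b^-1 ler01 b1_ge0 (ltW mu_gt0) mu_le1.
have -> : b^-1 * 1 + (1 - b^-1) * (b + 1) = b by field; rewrite gt_eqF.
rewrite f1 mulr0 add0r => fb_le.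
have mu1_ge0 : 0 <= 1 - b^-1 by rewrite subr_ge0.
have := ler_wpM2l mu1_ge0 (f_le_Dm_line Dm_le (b + 1) b1_ge0).
have -> : (1 - b^-1) * (f 0 + (nu - f 0) * (b + 1)) = f 0 + (nu - f 0) * b - b^-1 * nu.
  by field; rewrite gt_eqF.
have : 0 < b^-1 * nu by rewrite mulr_gt0.
lra.
Qed.

End ConvexSlope.

Section MeanOneDivergence.
Context {R : realType} {Y : finType}.
Variable f : R -> R.
Hypotheses (f_cvx : convex_on (fun t => 0 <= t) f) (f1 : f 1 = 0).

Lemma mean_one_sum_f_ge0 (r t : Y -> R) : (forall y, 0 <= r y) -> (forall y, 0 <= t y) ->
  mean_one r t -> 0 <= \sum_y r y * f (t y).
Proof.
(* Jensen's inequality as the case phi = - f, Psi = 0 of mean_one_concave_le *)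
move=> r0 t0 rt.
have := mean_one_concave_le setT f (fun x => - f x) (fun=> 0) _ _ _ _ r t r0 t0 rt.
rewrite mulr0; under eq_bigr do rewrite mulrN; rewrite sumrN oppr_le0; apply=> //.
- by move=> x y u _ _ _ _; rewrite !mulr0 addr0.
- move=> l a b l0 l1 a0 b0 lab; have := f_cvx a b l a0 b0 l0 l1.
  by rewrite lab f1 !mulrN -opprD oppr_le0.
Qed.

Lemma mean_one_wmean_dom0 (nu : \bar R) (r t : Y -> R) : (0 < nu)%E -> (Dm f <= nu)%E ->
  (forall y, 0 <= r y) -> (forall y, 0 <= t y) -> mean_one r t -> dom0 nu (wmean r (f \o t)).
Proof.
move=> nu_gt0 Dm_le r0 t0 rt; split.
  by apply: divr_ge0; [exact: mean_one_sum_f_ge0 | exact: sumr_ge0].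
case: nu nu_gt0 Dm_le => [nu| |] //= nu_gt0 Dm_le; last by rewrite ltry.
rewrite !lte_fin in nu_gt0 *.
have [r_eq0|r_neq0] := eqVneq (\sum_y r y) 0.
  by rewrite /wmean r_eq0 invr0 mulr0.
have r_gt0 : 0 < \sum_y r y by rewrite lt_def r_neq0 sumr_ge0.
have [k rk] : exists k, r k != 0.
  apply: contrapT => /forallNP r_eq0; move/eqP: r_neq0; apply; apply: big1 => y _.
  by apply/eqP/negbNE/negP; exact: r_eq0.
have [y0 [ry0 ty0]] : exists y, r y != 0 /\ 1 <= t y.
  have [tk|tk] := leP 1 (t k); first by exists k.
  by have [j [rj /ltW tj]] := mean_one_gt1 r0 rt rk tk; exists j.
rewrite /wmean ltr_pdivrMr //.
apply: (@lt_le_trans _ _ (\sum_y r y * (f 0 + (nu - f 0) * t y))).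
  apply: (ltr_sum_at y0) => [y|]; first by rewrite ler_wpM2l ?f_le_Dm_line.
  have ry0_gt0 : 0 < r y0 by rewrite lt_def ry0 r0.
  by rewrite ltr_pM2l //= f_lt_Dm_line.
under eq_bigr do rewrite mulrDr mulrCA.
rewrite big_split /= -mulr_suml -mulr_sumr rt.
by rewrite [leLHS](_ : _ = nu * \sum_y r y) //; ring.
Qed.

End MeanOneDivergence.

Lemma dom0_convex {R : realType} [nu : \bar R] [x y u : R] :
  dom0 nu x -> dom0 nu y -> 0 <= u -> u <= 1 -> dom0 nu (u * x + (1 - u) * y).
Proof.
move=> [x0 xnu] [y0 ynu] u0 u1; split; first by rewrite addr_ge0 ?mulr_ge0 ?subr_ge0.
move: xnu ynu; case: nu => [nu| |] //= xnu ynu; last by rewrite ltry.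
rewrite !lte_fin in xnu ynu *.
have [->|u_neq0] := eqVneq u 0; first by rewrite mul0r add0r subr0 mul1r.
have : u * x < u * nu by rewrite ltr_pM2l // lt_def u_neq0.
have : (1 - u) * y <= (1 - u) * nu by rewrite ler_wpM2l ?subr_ge0 // ltW.
lra.
Qed.

Section GInverse.
Context {R : realType} {nu : \bar R} {G : R -> R}.
Hypothesis G_incr : forall x y, dom0 nu x -> dom0 nu y -> x < y -> G x < G y.
Hypothesis G_onto : forall y, 0 <= y -> exists x, dom0 nu x /\ G x = y.

Lemma Ginv_spec [y] : 0 <= y -> dom0 nu (Ginv G nu y) /\ G (Ginv G nu y) = y.
Proof. by move=> y0; exact: (xgetPex 0 (G_onto _ y0)). Qed.

Lemma G_le x y : dom0 nu x -> dom0 nu y -> (G x <= G y) = (x <= y).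
Proof.
move=> dx dy; case: (ltgtP x y) => [xy|yx|->]; last exact: lexx.
- exact/ltW/G_incr.
- by apply/negbTE; rewrite -ltNge G_incr.
Qed.

Lemma le_Ginv y z : 0 <= z -> dom0 nu y -> (y <= Ginv G nu z) = (G y <= z).
Proof. by move=> z0 dy; have [dz Gz] := Ginv_spec z0; rewrite -G_le // Gz. Qed.

Lemma GinvK x : dom0 nu x -> 0 <= G x -> Ginv G nu (G x) = x.
Proof.
move=> dx Gx0; have [dz Gz] := Ginv_spec Gx0.
by apply/eqP; rewrite eq_le le_Ginv // lexx -G_le // Gz lexx.
Qed.

Hypothesis G0 : G 0 = 0.
Hypothesis G_ge0 : forall x, dom0 nu x -> 0 <= G x.
Hypothesis G_conc : forall c, 0 < c -> dom0 nu c ->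
  concave_on (dom0 nu) (fun x => Ginv G nu (G x + G c)).

Lemma Ginv_shift_concave [c] : dom0 nu c ->
  concave_on (dom0 nu) (fun x => Ginv G nu (G x + G c)).
Proof.
move=> dc; have [c_eq0|c_neq0] := eqVneq c 0; last first.
  by apply: G_conc => //; rewrite lt_def c_neq0; case: dc.
move=> x y u dx dy u0 u1; have dxy := dom0_convex dx dy u0 u1.
by rewrite c_eq0 G0 !addr0 !GinvK ?G_ge0.
Qed.

End GInverse.

Section Distributions.
Context {R : realType}.
Implicit Types (f h : R -> R).

Lemma sum_mul_ratio (Y : finType) (q r : Y -> R) :
  abs_cont q r -> \sum_y r y * (q y / r y) = \sum_y q y.
Proof.
move=> qr; apply: eq_bigr => y _.
have [r0|r_neq0] := eqVneq (r y) 0; first by rewrite r0 qr // mul0r.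
by rewrite mulrCA divff // mulr1.
Qed.

Lemma Df_wmean f (Y : finType) (q r : Y -> R) : is_dist r ->
  Df f q r = wmean r (f \o (fun y => q y / r y)).
Proof. by case=> _ r1; rewrite /wmean r1 divr1. Qed.

Lemma dist_mean_one [Y : finType] [q r : Y -> R] : is_dist q -> is_dist r ->
  abs_cont q r -> mean_one r (fun y => q y / r y).
Proof. by move=> [_ q1] [_ r1] qr; rewrite /mean_one sum_mul_ratio // q1 r1. Qed.

Lemma Df_dom0 [f] [nu : \bar R] :
  convex_on (fun t => 0 <= t) f -> f 1 = 0 -> (0 < nu)%E -> (Dm f <= nu)%E ->
  forall [Y : finType] [q r : Y -> R],
  is_dist q -> is_dist r -> abs_cont q r -> dom0 nu (Df f q r).
Proof.
move=> f_cvx f1 nu_gt0 Dm_le Y q r dq dr qr; rewrite Df_wmean //.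
apply: mean_one_wmean_dom0 => //; last exact: dist_mean_one.
  exact: dr.1.
by move=> y; rewrite divr_ge0 ?dq.1 ?dr.1.
Qed.

Lemma is_dist_prod [Y Z : finType] [p : Y -> R] [q : Z -> R] :
  is_dist p -> is_dist q -> is_dist (prod_dist p q).
Proof.
move=> [p0 p1] [q0 q1]; split=> [yz|]; first by rewrite mulr_ge0.
by rewrite -(pair_bigA _ (fun y z => p y * q z)) /= -big_distrlr /= p1 q1 mulr1.
Qed.

Lemma abs_cont_prod [Y Z : finType] [qY rY : Y -> R] [qZ rZ : Z -> R] :
  abs_cont qY rY -> abs_cont qZ rZ -> abs_cont (prod_dist qY qZ) (prod_dist rY rZ).
Proof.
move=> qrY qrZ [y z] /eqP; rewrite /prod_dist mulf_eq0 /=.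
by case/orP => /eqP r0; [rewrite qrY ?mul0r | rewrite qrZ ?mulr0].
Qed.

Lemma Df_prod_dist f (Y Z : finType) (qY rY : Y -> R) (qZ rZ : Z -> R) :
  Df f (prod_dist qY qZ) (prod_dist rY rZ) =
  Df (fun s => Df f (fun z => s * qZ z) rZ) qY rY.
Proof.
rewrite /Df /prod_dist.
rewrite -(pair_bigA _ (fun y z => rY y * rZ z * f (qY y * qZ z / (rY y * rZ z)))) /=.
apply: eq_bigr => y _; rewrite mulr_sumr; apply: eq_bigr => z _.
by rewrite -mulrA invfM; congr (_ * (_ * f _)); rewrite mulrACA mulrA.
Qed.

Lemma Df_prod_dist_swap f (Y Z : finType) (qY rY : Y -> R) (qZ rZ : Z -> R) :
  Df f (prod_dist qY qZ) (prod_dist rY rZ) = Df f (prod_dist qZ qY) (prod_dist rZ rY).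
Proof.
rewrite !Df_prod_dist /Df; under eq_bigr do rewrite mulr_sumr.
rewrite exchange_big /=; apply: eq_bigr => z _; rewrite mulr_sumr.
by apply: eq_bigr => y _; rewrite mulrCA; congr (_ * (_ * f _)); ring.
Qed.

(* the binary pair (q, r) with r = (l, 1 - l) and likelihood ratios q / r = (a, b) is
   (two_point l a b, two_point l 1 1) *)
Definition two_point (l a b : R) : bool -> R := fun x => if x then l * a else (1 - l) * b.

Lemma is_dist_two_point [l a b] : 0 <= l -> l <= 1 -> 0 <= a -> 0 <= b ->
  l * a + (1 - l) * b = 1 -> is_dist (two_point l a b) /\ is_dist (two_point l 1 1).
Proof.
move=> l0 l1 a0 b0 lab; have l1' : 0 <= 1 - l by rewrite subr_ge0.
split; split; rewrite ?big_bool /two_point /= ?lab //; try by case; rewrite mulr_ge0.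
by rewrite !mulr1 addrC subrK.
Qed.

Lemma abs_cont_two_point l a b : abs_cont (two_point l a b) (two_point l 1 1).
Proof. by case; rewrite /two_point mulr1 => ->; rewrite mul0r. Qed.

Lemma Df_two_point h l a b :
  Df h (two_point l a b) (two_point l 1 1) = l * h a + (1 - l) * h b.
Proof.
have mulK (x c : R) : x * h (x * c / x) = x * h c.
  by have [->|x_neq0] := eqVneq x 0; rewrite ?mul0r // mulrAC divff ?mul1r.
by rewrite /Df big_bool /two_point !mulr1 !mulK.
Qed.

End Distributions.

Section Tensorization.
Context {R : realType}.
Variables (G f : R -> R).

Definition G_Df_subadditive (Y Z : finType) : Prop :=
  forall (qY rY : Y -> R) (qZ rZ : Z -> R),
    is_dist qY -> is_dist rY -> is_dist qZ -> is_dist rZ ->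
    abs_cont qY rY -> abs_cont qZ rZ ->
    G (Df f (prod_dist qY qZ) (prod_dist rY rZ)) <= G (Df f qY rY) + G (Df f qZ rZ).

Lemma G_Df_subadditive_sym [Y Z : finType] : G_Df_subadditive Y Z -> G_Df_subadditive Z Y.
Proof.
move=> subYZ qZ rZ qY rY dqZ drZ dqY drY qrZ qrY.
by rewrite Df_prod_dist_swap addrC; apply: subYZ.
Qed.

Variable nu : \bar R.
Hypotheses (nu_gt0 : (0 < nu)%E) (G0 : G 0 = 0).
Hypothesis G_incr : forall x y, dom0 nu x -> dom0 nu y -> x < y -> G x < G y.
Hypothesis G_ge0 : forall x, dom0 nu x -> 0 <= G x.
Hypothesis G_onto : forall y, 0 <= y -> exists x, dom0 nu x /\ G x = y.
Hypothesis G_conc : forall c, 0 < c -> dom0 nu c ->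
  concave_on (dom0 nu) (fun x => Ginv G nu (G x + G c)).
Hypotheses (f_cvx : convex_on (fun t => 0 <= t) f) (f1 : f 1 = 0).
Hypothesis Dm_le : (Dm f <= nu)%E.

Lemma f_two_point_dom0 [l a b] : 0 <= l -> l <= 1 -> 0 <= a -> 0 <= b ->
  l * a + (1 - l) * b = 1 -> dom0 nu (l * f a + (1 - l) * f b).
Proof.
move=> l0 l1 a0 b0 lab; have [dB dB1] := is_dist_two_point l0 l1 a0 b0 lab.
rewrite -(Df_two_point f); apply: (Df_dom0 f_cvx f1 nu_gt0 Dm_le) => //.
exact: abs_cont_two_point.
Qed.

Lemma two_point_le_Ginv [Z : finType] [qZ rZ : Z -> R] :
  G_Df_subadditive bool Z -> is_dist qZ -> is_dist rZ -> abs_cont qZ rZ ->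
  forall l a b, 0 <= l -> l <= 1 -> 0 <= a -> 0 <= b -> l * a + (1 - l) * b = 1 ->
  l * Df f (fun z => a * qZ z) rZ + (1 - l) * Df f (fun z => b * qZ z) rZ <=
  Ginv G nu (G (l * f a + (1 - l) * f b) + G (Df f qZ rZ)).
Proof.
move=> subB dqZ drZ qrZ l a b l0 l1 a0 b0 lab.
have Ddom := Df_dom0 f_cvx f1 nu_gt0 Dm_le.
have [dB dB1] := is_dist_two_point l0 l1 a0 b0 lab.
have qrB := abs_cont_two_point l a b.
have := Ddom _ _ _ (is_dist_prod dB dqZ) (is_dist_prod dB1 drZ) (abs_cont_prod qrB qrZ).
have := subB _ _ _ _ dB dB1 dqZ drZ qrB qrZ.
rewrite Df_prod_dist !Df_two_point => Gle dprod.
have dZ := Ddom _ _ _ dqZ drZ qrZ.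
have dfab := f_two_point_dom0 l0 l1 a0 b0 lab.
by rewrite (le_Ginv G_incr G_onto) ?addr_ge0 ?G_ge0.
Qed.

Lemma G_Df_subadditive_bool_l [Y Z : finType] :
  G_Df_subadditive bool Z -> G_Df_subadditive Y Z.
Proof.
move=> subB qY rY qZ rZ dqY drY dqZ drZ qrY qrZ.
have Ddom := Df_dom0 f_cvx f1 nu_gt0 Dm_le.
have dZ := Ddom _ _ _ dqZ drZ qrZ.
have dprod := Ddom _ _ _ (is_dist_prod dqY dqZ) (is_dist_prod drY drZ) (abs_cont_prod qrY qrZ).
have dY := Ddom _ _ _ dqY drY qrY.
rewrite -(le_Ginv G_incr G_onto) ?addr_ge0 ?G_ge0 // (Df_prod_dist f Y Z).
have := mean_one_concave_le (dom0 nu) f (fun s => Df f (fun z => s * qZ z) rZ)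
  (fun x => Ginv G nu (G x + G (Df f qZ rZ)))
  (Ginv_shift_concave G_incr G_onto G0 G_ge0 G_conc dZ)
  (two_point_le_Ginv subB dqZ drZ qrZ) f_two_point_dom0 _
  rY (fun y => qY y / rY y) drY.1 _ (dist_mean_one dqY drY qrY).
rewrite drY.2 mul1r -Df_wmean // => le_Psi; apply: le_Psi.
- by move=> r t; apply: mean_one_wmean_dom0.
- by move=> y; rewrite divr_ge0 ?dqY.1 ?drY.1.
Qed.

End Tensorization.

Theorem lemma5 (R : realType) (nu : \bar R) (G f : R -> R)
  (nu_gt0 : (0 < nu)%E)
  (G0 : G 0 = 0)
  (G_incr : forall x y, dom0 nu x -> dom0 nu y -> x < y -> G x < G y)
  (G_ge0 : forall x, dom0 nu x -> 0 <= G x)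
  (G_onto : forall y, 0 <= y -> exists x, dom0 nu x /\ G x = y)
  (G_conc : forall c, 0 < c -> dom0 nu c ->
     concave_on (dom0 nu) (fun x => Ginv G nu (G x + G c)))
  (f_cvx : convex_on (fun t => 0 <= t) f)
  (f1 : f 1 = 0)
  (Dm_le : (Dm f <= nu)%E)
  (H2 : forall (Y Z : finType), #|Y| = 2%N -> #|Z| = 2%N ->
     forall (qY rY : Y -> R) (qZ rZ : Z -> R),
       is_dist qY -> is_dist rY -> is_dist qZ -> is_dist rZ ->
       abs_cont qY rY -> abs_cont qZ rZ ->
       G (Df f (prod_dist qY qZ) (prod_dist rY rZ))
         <= G (Df f qY rY) + G (Df f qZ rZ)) :
  forall (Y Z : finType) (qY rY : Y -> R) (qZ rZ : Z -> R),
    is_dist qY -> is_dist rY -> is_dist qZ -> is_dist rZ ->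
    abs_cont qY rY -> abs_cont qZ rZ ->
    G (Df f (prod_dist qY qZ) (prod_dist rY rZ))
      <= G (Df f qY rY) + G (Df f qZ rZ).
Proof.
move=> Y Z.
have sub_bool : G_Df_subadditive G f bool bool := H2 _ _ card_bool card_bool.
have extend_l := G_Df_subadditive_bool_l G f nu
  nu_gt0 G0 G_incr G_ge0 G_onto G_conc f_cvx f1 Dm_le.
exact: extend_l Y Z (G_Df_subadditive_sym G f (extend_l Z bool sub_bool)).
Qed.
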